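(* Let $p$ be a prime, $P$ a finite $p$-group, and $\alpha\in\operatorname{Irr}(P)$ with $c(\alpha)=p^a$ for some $a\ge1$. (a) If $p$ is odd or $p^a=4$, then $\mathbb{Q}_{p^a}(\alpha)=\mathbb{Q}_p(\alpha)$. (b) If $p=2$ and $p^a\ge 8$, then $[\mathbb{Q}_{p^a}(\alpha):\mathbb{Q}_p(\alpha)]\le 2$ and $[\mathbb{Q}_{p^a}(\alpha):\mathbb{Q}_p(\alpha)]$ divides $\alpha(1)$.
   Context: For $n\ge1$, $\mathbb{Q}_n:=\mathbb{Q}(e^{2\pi i/n})$. For a character $\chi$, $\mathbb{Q}(\chi)$ is its field of values and $c(\chi)$ is the conductor of $\mathbb{Q}(\chi)$, i.e. the smallest $n\ge1$ with $\mathbb{Q}(\chi)\subseteq\mathbb{Q}_n$. $\mathbb{Q}_m(\chi)$ denotes the compositum of $\mathbb{Q}_m$ and $\mathbb{Q}(\chi)$. *)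

From HB Require Import structures.
From mathcomp Require Import all_boot all_order all_algebra all_fingroup all_solvable all_field all_character.
Set Implicit Arguments. Unset Strict Implicit. Unset Printing Implicit Defensive.
Import GRing.Theory Num.Theory.
Local Open Scope ring_scope.

(* x lies in Q_n = Q(e^{2 pi i/n}) (inside algC): x is a rational polynomial
   expression in some primitive n-th root of unity. *)
Definition inQn (n : nat) (x : algC) : Prop :=
  exists2 z : algC, n.-primitive_root z &
    exists q : {poly rat}, x = (map_poly ratr q).[z].

Definition values_in_Qn (gT : finGroupType) (G : {group gT}) (chi : 'CF(G))
  (n : nat) : Prop := forall g, g \in G -> inQn n (chi g).

Definition conductor_is (gT : finGroupType) (G : {group gT}) (chi : 'CF(G))
  (n : nat) : Prop :=
  (0 < n)%N /\ values_in_Qn chi n /\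
  (forall m, (0 < m)%N -> values_in_Qn chi m -> (n <= m)%N).

From HB Require Import structures.
From mathcomp Require Import all_boot all_order all_algebra all_fingroup all_solvable all_field all_character.
From mathcomp Require Import ring zify.
Import GRing.Theory Num.Theory.
Set Implicit Arguments. Unset Strict Implicit. Unset Printing Implicit Defensive.

(* Let z be a primitive p^a-th root of unity and E = Q_p(chi). Every conjugate
   of z over E fixes z ^+ p^(a-1), so it is z ^+ k with k = 1 (mod p). If
   k <> 1 (mod p^a), lifting the exponent (for p odd, or k = 1 (mod 4)) yields a
   power m with k^m = 1 (mod p^(a-1)) but not (mod p^a); the corresponding
   E-embedding sends z to z * zeta, zeta a primitive p-th root of unity, and
   averaging over the p conjugates z * zeta^j shows E <= Q(z^p) = Q_(p^(a-1)),
   contradicting c(chi) = p^a. So for p odd or p^a = 4, z lies in E. For p = 2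
   every nontrivial conjugate is z ^+ k with k = 3 (mod 4); two of them would
   compose to one with k = 1 (mod 4), so [E(z) : E] <= 2. When it equals 2 the
   conjugation sends i to -i, so E contains no 4th root of unity other than
   +1 and -1; a linear chi would then take only the values +1 and -1, which
   contradicts c(chi) >= 8. Hence chi(1) is a nontrivial power of 2. *)

Lemma expn_1add d n : exists q, (1 + d) ^ n = 1 + n * d + q * d ^ 2.
Proof.
elim: n => [|n [q IH]]; first by exists 0; rewrite expn0.
by exists (n + q + q * d); rewrite expnS IH; ring.
Qed.

Lemma sum_expn_1add d n :
  exists q, \sum_(i < n) (1 + d) ^ i = n + d * 'C(n, 2) + q * d ^ 2.
Proof.
elim: n => [|n [q IH]]; first by exists 0; rewrite big_ord0 bin0n muln0.
have [r Hr] := expn_1add d n.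
by exists (q + r); rewrite big_ord_recr /= IH Hr binS bin1; ring.
Qed.

Section LiftingTheExponent.
Variables (p y : nat).
Hypotheses (p_pr : prime p) (y_gt0 : 0 < y) (p_dvd : p %| y - 1).

Let y_1add : y = 1 + (y - 1). Proof. by rewrite subnKC. Qed.
Let expn_sub1 : y ^ p - 1 = (y - 1) * \sum_(i < p) y ^ i.
Proof. by rewrite !subn1 predn_exp. Qed.

Lemma dvdn_sum_expn_prime : p %| \sum_(i < p) y ^ i.
Proof.
have [q] := sum_expn_1add (y - 1) p; rewrite -y_1add => ->.
case/dvdnP: p_dvd => d ->.
by apply/dvdnP; exists (1 + d * 'C(p, 2) + q * d ^ 2 * p); ring.
Qed.

Lemma sum_expn_prime_exact : odd p || (4 %| y - 1) ->
  exists t, \sum_(i < p) y ^ i = p * (1 + p * t).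
Proof.
move=> odd_or_4; have [q] := sum_expn_1add (y - 1) p; rewrite -y_1add => ->.
move: p_dvd odd_or_4 => /dvdnP[d ->] odd_or_4.
have : p * p %| d * p * 'C(p, 2) + q * (d * p) ^ 2.
  apply: dvdn_add; last by apply/dvdnP; exists (q * d ^ 2); ring.
  have [p2 | p_odd] := even_prime p_pr.
    by move: odd_or_4; rewrite p2 bin2 muln1 => /dvdn_trans->.
  have /dvdnP[c ->] : p %| 'C(p, 2) by rewrite prime_dvd_bin //= odd_prime_gt2.
  by apply/dvdnP; exists (d * c); ring.
by rewrite -addnA => /dvdnP[t ->]; exists t; ring.
Qed.

Lemma dvdn_expn_prime_sub1 b : p ^ b.+1 %| y - 1 -> p ^ b.+2 %| y ^ p - 1.
Proof.
move=> dvd_b; rewrite expn_sub1 expnS mulnC dvdn_mul //.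
exact: dvdn_sum_expn_prime.
Qed.

Lemma dvdn_sub1_of_expn_prime b : odd p || (4 %| y - 1) ->
  p ^ b.+1 %| y ^ p - 1 -> p ^ b %| y - 1.
Proof.
move=> /sum_expn_prime_exact[t Et]; rewrite expn_sub1 Et.
rewrite expnSr (mulnC p) mulnA dvdn_pmul2r ?prime_gt0 //.
rewrite Gauss_dvdl // coprimeXl // prime_coprime // dvdn_addl ?dvdn_mulr //.
by rewrite dvdn1; apply: contraTneq (prime_gt1 p_pr) => ->.
Qed.

End LiftingTheExponent.

Lemma dvdn_expn_sub1 d k m : d %| k - 1 -> d %| k ^ m - 1.
Proof. by rewrite !subn1 => /dvdn_trans; apply; apply: dvdn_pred_predX. Qed.

Lemma exists_expn_sub1_exact p a k :
    prime p -> 1 < a -> 0 < k -> p %| k - 1 -> ~~ (p ^ a %| k - 1) ->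
    [|| odd p, 4 %| k - 1 | a == 2] ->
  exists m, (p ^ a.-1 %| k ^ m - 1) && ~~ (p ^ a %| k ^ m - 1).
Proof.
move=> p_pr a_gt1 k_gt0 p_dvd not_pa_dvd.
have [a2 _ | a_neq2 cond] := eqVneq a 2.
  by exists 1; rewrite !expn1 {1}a2 expn1 p_dvd.
have odd_or_4 : odd p || (4 %| k - 1) by rewrite orbF in cond.
have dvd_expp j : p ^ j.+1 %| k ^ (p ^ j) - 1.
  elim: j => [|j IHj]; first by rewrite !expn1.
  rewrite [p ^ j.+1]expnSr expnM dvdn_expn_prime_sub1 ?expn_gt0 ?k_gt0 //.
  exact: dvdn_expn_sub1.
have ex_c : exists c, p ^ a %| k ^ (p ^ c) - 1.
  by exists a.-1; rewrite -[in p ^ a](ltn_predK a_gt1) dvd_expp.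
have [c pa_dvd c_min] := ex_minnP ex_c.
have c_gt0 : 0 < c.
  by rewrite lt0n; apply: contraNneq not_pa_dvd => c0; rewrite c0 expn1 in pa_dvd.
exists (p ^ c.-1); apply/andP; split; last first.
  by apply/negP => /c_min; rewrite leqNgt ltn_predL c_gt0.
apply: (dvdn_sub1_of_expn_prime p_pr); first by rewrite expn_gt0 k_gt0.
- exact: dvdn_expn_sub1.
- by case/orP: odd_or_4 => [-> // | /dvdn_expn_sub1->]; rewrite orbT.
by rewrite prednK ?(leq_trans _ a_gt1) // -expnM -expnSr prednK.
Qed.

Local Open Scope ring_scope.

Section RootOfUnitySums.
Variables (R : idomainType) (n : nat) (zeta : R).
Hypothesis zeta_prim : n.-primitive_root zeta.

Lemma sum_prim_root_expr i : ~~ (n %| i)%N -> \sum_(j < n) (zeta ^+ i) ^+ j = 0.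
Proof.
move=> n_ndvd_i; have /eqP : (zeta ^+ i) ^+ n = 1.
  by rewrite exprAC (prim_expr_order zeta_prim) expr1n.
rewrite -subr_eq0 subrX1 mulf_eq0 subr_eq0 -(prim_order_dvd zeta_prim).
by rewrite (negPf n_ndvd_i) => /eqP.
Qed.

Lemma sum_horner_prim_root (x : R) (c : {poly R}) : (size c <= n)%N ->
  \sum_(j < n) c.[x * zeta ^+ j] = n%:R * c`_0.
Proof.
move=> size_c; under eq_bigr => j _ do rewrite (horner_coef_wide _ size_c).
rewrite exchange_big (bigD1 (Ordinal (prim_order_gt0 zeta_prim))) //=.
rewrite [X in _ + X]big1 ?addr0.
  under eq_bigr => j _ do rewrite expr0 mulr1.
  by rewrite sumr_const card_ord mulr_natl.
move=> i i_neq0; under eq_bigr => j _ do rewrite exprMn exprAC mulrA.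
rewrite -mulr_sumr sum_prim_root_expr ?mulr0 //.
rewrite gtnNdvd ?ltn_ord // lt0n; apply: contraNneq i_neq0 => i0.
by apply/eqP; apply: val_inj.
Qed.

End RootOfUnitySums.

Lemma size_Fadjoin_poly_le (F : fieldType) (L : fieldExtType F)
    (K : {subfield L}) (y x : L) m :
  (0 < m)%N -> y ^+ m \in K -> (size (Fadjoin_poly K y x) <= m)%N.
Proof.
move=> m_gt0 Kym; apply: leq_trans (size_Fadjoin_poly K y x) _.
rewrite -ltnS -size_minPoly.
have : minPoly K y %| 'X^m - (y ^+ m)%:P.
  apply: minPoly_dvdp; first by rewrite rpredB ?polyOverXn // polyOverC.
  by rewrite rootE !hornerE subrr.
move/dvdp_leq; rewrite size_XnsubC //; apply.
by rewrite -size_poly_eq0 size_XnsubC.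
Qed.

(* Averaging the coordinates of x over the n conjugates y * zeta ^+ j keeps
   only the constant one. *)
Lemma Fadjoin_poly_prim_root_mem (F : fieldType) (L : fieldExtType F)
    (M : {subfield L}) (y x zeta : L) n :
    n.-primitive_root zeta -> y ^+ n \in M -> x \in <<M; y>>%VS ->
    (forall j, (Fadjoin_poly M y x).[y * zeta ^+ j] = x) ->
  x \in M.
Proof.
move=> zeta_prim Myn Mx_y conj_x; pose c := Fadjoin_poly M y x.
have size_c : (size c <= n)%N.
  by rewrite size_Fadjoin_poly_le ?(prim_order_gt0 zeta_prim).
have := sum_horner_prim_root zeta_prim y size_c.
under eq_bigr => j _ do rewrite conj_x.
rewrite sumr_const card_ord -[x *+ n]mulr_natl.
move=> /(mulfI (prim_root_natf_neq0 zeta_prim)) ->.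
exact/polyOverP/Fadjoin_polyOver.
Qed.

Section KHom.
Variables (F : fieldType) (L : fieldExtType F).
Implicit Types (K V : {subfield L}) (f : 'End(L)).

Lemma kHom_fixed K V f x : kHom K V f -> x \in K -> f x = x.
Proof. by case/kHomP_tmp => fixK _; apply: fixK. Qed.

Lemma kHom_mul K V f x y : kHom K V f -> x \in V -> y \in V ->
  f (x * y) = f x * f y.
Proof. by case/kHomP_tmp => _ fM; apply: fM. Qed.

Lemma kHom_exp K V f x m : kHom K V f -> x \in V -> f (x ^+ m) = f x ^+ m.
Proof.
move=> homf Vx; elim: m => [|m IHm]; first by rewrite !expr0 (kHom_fixed homf) ?mem1v.
by rewrite !exprS (kHom_mul homf) ?rpredX // IHm.
Qed.

Lemma kHom_fixed_adjoin K V f y : kHom K V f -> y \in V -> f y = y ->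
  kHom <<1; y>> V f.
Proof.
move=> homf Vy fy; apply/kHomP_tmp; split=> [v | v w Vv Vw]; last first.
  exact: (kHom_mul homf).
have poly1V q : q \is a polyOver 1%VS -> q \is a polyOver V.
  exact/polyOverSv/sub1v.
case/Fadjoin_polyP => q q1 ->; rewrite (kHom_horner homf (poly1V _ q1) Vy) fy.
by rewrite (kHom_poly_id homf) ?(polyOverSv (sub1v K)).
Qed.

End KHom.

Section AdjoinRoot.
Variables (F : fieldType) (L : fieldExtType F) (E : {subfield L}) (z : L).

Definition kHomExtend1 (r : L) : 'End(L) := kHomExtend E \1%VF z r.

Section Conjugate.
Variable r : L.
Hypothesis r_root : root (minPoly E z) r.

Let map1_minPoly_root : root (map_poly \1%VF (minPoly E z)) r.
Proof. by rewrite (kHom_poly_id (kHom1 E E)) ?minPolyOver. Qed.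

Lemma kHomExtend1P : kHom E <<E; z>> (kHomExtend1 r).
Proof. exact: kHomExtendP (kHom1 E E) map1_minPoly_root. Qed.

Lemma kHomExtend1_val : kHomExtend1 r z = r.
Proof. exact: kHomExtend_val (kHom1 E E) map1_minPoly_root. Qed.

End Conjugate.

Lemma kHom_root_minPoly f x : kHom E <<E; z>> f -> x \in <<E; z>>%VS ->
  root (minPoly E z) x -> root (minPoly E z) (f x).
Proof. by move=> homf; apply: kHom_root_id (subv_adjoin E z) homf (minPolyOver E z). Qed.

Lemma root_minPoly_exprM k1 k2 : root (minPoly E z) (z ^+ k1) ->
  root (minPoly E z) (z ^+ k2) -> root (minPoly E z) (z ^+ (k1 * k2)).
Proof.
move=> root1 root2; have homf := kHomExtend1P root2; have Ez := memv_adjoin E z.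
move: (kHom_root_minPoly homf (rpredX k1 Ez) root1).
by rewrite (kHom_exp _ homf Ez) kHomExtend1_val // -exprM mulnC.
Qed.

Lemma root_minPoly_exprX k m : root (minPoly E z) (z ^+ k) ->
  root (minPoly E z) (z ^+ (k ^ m)).
Proof.
move=> root_k; elim: m => [|m IHm]; first by rewrite expn0 expr1 root_minPoly.
by rewrite expnS root_minPoly_exprM.
Qed.

Lemma root_minPoly_mul_exprX w : w \in <<E; z>>%VS ->
    root (minPoly E z) (z * w) -> kHomExtend1 (z * w) w = w ->
  forall j, root (minPoly E z) (z * w ^+ j).
Proof.
move=> Ew root_zw fix_w; have homf := kHomExtend1P root_zw; have Ez := memv_adjoin E z.
elim=> [|j IHj]; first by rewrite expr0 mulr1 root_minPoly.
have := kHom_root_minPoly homf (rpredM Ez (rpredX j Ew)) IHj.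
rewrite (kHom_mul homf Ez (rpredX j Ew)) (kHom_exp _ homf Ew) kHomExtend1_val //.
by rewrite fix_w -mulrA -exprS.
Qed.

Section PrimitiveRoot.
Variable n : nat.
Hypothesis z_prim : n.-primitive_root z.

Let minPoly_dvd_Xn_sub1 : minPoly E z %| 'X^n - 1.
Proof.
apply: minPoly_dvdp; first by rewrite rpredB ?polyOverXn ?rpred1.
by rewrite rootE !hornerE prim_expr_order // subrr.
Qed.

Lemma root_minPoly_prim_root r : root (minPoly E z) r -> exists k, r = z ^+ k.
Proof.
move/(root_dvdp minPoly_dvd_Xn_sub1); rewrite rootE !hornerE subr_eq0.
by case/eqP/(prim_rootP z_prim) => k ->; exists k.
Qed.

Lemma uniq_roots_minPoly_prim_root : exists t : seq L,
  [/\ uniq t, size t = adjoin_degree E z & forall r, (r \in t) = root (minPoly E z) r].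
Proof.
have := minPoly_dvd_Xn_sub1; rewrite -(factor_Xn_sub_1 z_prim).
case/dvdp_prod_XsubC => m minPoly_eq.
exists [seq z ^+ i | i <- mask m (index_iota 0 n)].
have {}minPoly_eq : minPoly E z %=
    \prod_(x <- [seq z ^+ i | i <- mask m (index_iota 0 n)]) ('X - x%:P).
  by rewrite big_map.
split.
- rewrite map_inj_in_uniq ?mask_uniq ?iota_uniq // => i j.
  move=> /mem_mask; rewrite mem_index_iota => lt_i_n.
  move=> /mem_mask; rewrite mem_index_iota => lt_j_n /eqP.
  by rewrite (eq_prim_root_expr z_prim) !modn_small // => /eqP.
- by move/eqp_size: minPoly_eq; rewrite size_minPoly size_prod_XsubC => -[].
- by move=> r; rewrite (eqp_root minPoly_eq) root_prod_XsubC.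
Qed.

Let other_roots : exists t : seq L, [/\ uniq t, size t = (adjoin_degree E z).-1
  & forall r, r \in t -> r != z /\ root (minPoly E z) r].
Proof.
have [t [uniq_t size_t t_roots]] := uniq_roots_minPoly_prim_root.
have z_t : z \in t by rewrite t_roots root_minPoly.
exists (rem z t); rewrite size_rem // size_t rem_uniq //; split=> // r.
by rewrite mem_rem_uniq // inE -t_roots => /andP[].
Qed.

Lemma adjoin_deg_gt1_conj : (1 < adjoin_degree E z)%N ->
  exists2 r, r != z & root (minPoly E z) r.
Proof.
move=> deg_gt1; have [[|r t] [_ size_t t_roots]] := other_roots.
  by move: (adjoin_degree E z) deg_gt1 size_t => d ? /= ?; lia.
by have [] := t_roots r (mem_head r t); exists r.
Qed.

Lemma adjoin_deg_gt2_conj : (2 < adjoin_degree E z)%N -> exists r1 r2,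
  [/\ r1 != r2, r1 != z, r2 != z, root (minPoly E z) r1 & root (minPoly E z) r2].
Proof.
move=> deg_gt2; have [[|r1 [|r2 t]] [uniq_t size_t t_roots]] := other_roots;
  try by move: (adjoin_degree E z) deg_gt2 size_t => d ? /= ?; lia.
have [r1_neqz root1] := t_roots r1 (mem_head r1 _).
have [r2_neqz root2] : r2 != z /\ root (minPoly E z) r2.
  by apply: t_roots; rewrite !inE eqxx orbT.
exists r1, r2; split=> //.
by move: uniq_t => /= /andP[]; rewrite inE negb_or => /andP[].
Qed.

End PrimitiveRoot.

End AdjoinRoot.

Section PrimePowerRoot.
Variables (F : fieldType) (L : fieldExtType F) (E : {subfield L}) (p a : nat) (z : L).
Hypotheses (p_pr : prime p) (a_gt0 : (0 < a)%N) (z_prim : (p ^ a).-primitive_root z).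

Let pa_eq : (p ^ a = p * p ^ a.-1)%N. Proof. by rewrite -expnS prednK. Qed.

Lemma root_minPoly_expr_congr1 k : z ^+ (p ^ a.-1) \in E ->
  root (minPoly E z) (z ^+ k) -> (0 < k)%N /\ (p %| k - 1)%N.
Proof.
move=> Ew root_k; have homf := kHomExtend1P root_k.
have := kHom_fixed homf Ew; rewrite (kHom_exp _ homf) ?memv_adjoin //.
rewrite kHomExtend1_val // -exprM => /eqP; rewrite (eq_prim_root_expr z_prim) pa_eq.
have pa1_gt0 : (0 < p ^ a.-1)%N by rewrite expn_gt0 prime_gt0.
rewrite -[X in _ == X %[mod _]]mul1n -!muln_modl // eqn_pmul2r //.
rewrite [(1 %% p)%N]modn_small ?prime_gt1 // => /eqP k_mod.
have k_gt0 : (0 < k)%N by move: k_mod; case: (k) => //; rewrite mod0n.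
by rewrite -eqn_mod_dvd // k_mod modn_small ?prime_gt1.
Qed.

(* zeta := z ^+ (k - 1) is a primitive p-th root of unity, and every
   E-embedding z |-> z * zeta ^+ j fixes z ^+ p. *)
Lemma subv_Fadjoin_expp k : (E <= <<1; z>>)%VS -> (1 < a)%N ->
    root (minPoly E z) (z ^+ k) -> (p ^ a.-1 %| k - 1)%N -> ~~ (p ^ a %| k - 1)%N ->
  (E <= <<1; z ^+ p>>)%VS.
Proof.
move=> E_sub a_gt1 root_k /dvdnP[u k_eq] not_pa_dvd.
have p_ndvd_u : ~~ (p %| u)%N.
  by apply: contra not_pa_dvd => /dvdnP[v u_eq]; rewrite k_eq u_eq pa_eq -mulnA dvdn_mull.
have k_gt0 : (0 < k)%N.
  by rewrite lt0n; apply: contraNneq not_pa_dvd => ->; rewrite dvdn0.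
pose zeta := z ^+ (k - 1).
have zeta_prim : p.-primitive_root zeta.
  rewrite /zeta k_eq mulnC exprM prim_root_exp_coprime.
    by rewrite coprime_sym prime_coprime.
  have p_dvd_pa : (p %| p ^ a)%N by rewrite pa_eq dvdn_mulr.
  by have := dvdn_prim_root z_prim p_dvd_pa; rewrite pa_eq mulKn ?prime_gt0.
have Ezeta : zeta \in <<E; z>>%VS by rewrite rpredX ?memv_adjoin.
have zk : z ^+ k = z * zeta by rewrite -exprS subn1 prednK.
have conj_j j : root (minPoly E z) (z * zeta ^+ j).
  apply: root_minPoly_mul_exprX; rewrite -?zk //.
  rewrite (kHom_exp _ (kHomExtend1P root_k)) ?memv_adjoin // kHomExtend1_val //.
  rewrite zk exprMn -[RHS]mulr1; congr (_ * _); apply/eqP; rewrite -(prim_order_dvd zeta_prim).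
  by rewrite k_eq dvdn_mull // -[p in (p %| _)%N]expn1 dvdn_exp2l // -ltnS prednK.
pose M := <<1; z ^+ p>>%AS.
have fixM j : kHom M <<E; z>> (kHomExtend1 E z (z * zeta ^+ j)).
  have homf := kHomExtend1P (conj_j j).
  have fix_zp : kHomExtend1 E z (z * zeta ^+ j) (z ^+ p) = z ^+ p.
    rewrite (kHom_exp _ homf) ?memv_adjoin // kHomExtend1_val //.
    by rewrite exprMn exprAC (prim_expr_order zeta_prim) expr1n mulr1.
  exact: kHom_fixed_adjoin homf (rpredX _ (memv_adjoin E z)) fix_zp.
have Mz : (M <= <<E; z>>)%VS.
  by apply/FadjoinP; split; [apply: sub1v | rewrite rpredX ?memv_adjoin].
apply/subvP => x Ex.
have xMz : x \in <<M; z>>%VS.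
  apply: subvP (subvP E_sub x Ex); apply/FadjoinP; split; last exact: memv_adjoin.
  exact: subv_trans (sub1v M) (subv_adjoin M z).
apply: (Fadjoin_poly_prim_root_mem zeta_prim _ xMz) => [|j]; first exact: memv_adjoin.
have homf := kHomExtend1P (conj_j j).
rewrite -[RHS](kHom_fixed homf Ex) -[in RHS](Fadjoin_poly_eq xMz).
have Mc := Fadjoin_polyOver M z x.
rewrite (kHom_horner homf (polyOverSv Mz Mc) (memv_adjoin E z)).
by rewrite (kHom_poly_id (fixM j) Mc) kHomExtend1_val.
Qed.

End PrimePowerRoot.

Section TwoPowerRoot.
Variables (F : fieldType) (L : fieldExtType F) (E : {subfield L}) (a : nat) (z : L).
Hypotheses (a_gt1 : (1 < a)%N) (z_prim : (2 ^ a).-primitive_root z).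

(* f maps the 4th root of unity i = z ^+ (2 ^ a %/ 4) to i ^+ k = -i, so the
   fixed field E cannot contain +i or -i. *)
Lemma kHom_unity_2power_sqr1 f k : kHom E <<E; z>> f -> f z = z ^+ k ->
    (k %% 4 = 3)%N ->
  forall e x, x \in E -> x ^+ (2 ^ e) = 1 -> x ^+ 2 = 1.
Proof.
move=> homf fz k_mod4.
have i_prim := dvdn_prim_root z_prim (dvdn_exp2l 2 a_gt1 : (2 ^ 2 %| 2 ^ a)%N).
set i := z ^+ _ in i_prim.
have i4 : i ^+ 4 = 1 := prim_expr_order i_prim.
have i2 : i ^+ 2 = -1.
  have /eqP : (i ^+ 2) ^+ 2 = 1 by rewrite -exprM.
  rewrite sqrf_eq1 -(prim_order_dvd i_prim) => /orP[//|/eqP//].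
have fi : f i = - i.
  rewrite /i (kHom_exp _ homf) ?memv_adjoin // fz exprAC -(expr_mod _ i4) k_mod4.
  by rewrite exprS i2 mulrN1.
have i_neqNi : i != - i.
  have two_neq0 : 2%:R != 0 :> L.
    apply: contraNneq (prim_root_natf_neq0 z_prim) => two0.
    by rewrite natrX two0 expr0n -(prednK (ltnW a_gt1)).
  apply/eqP => i_eqNi.
  have /eqP : 2%:R * i = 0 by rewrite mulr2n mulrDl mul1r {1}i_eqNi addNr.
  rewrite mulf_eq0 (negPf two_neq0) /= => /eqP i0.
  by move: i4; rewrite i0 expr0n => /eqP; rewrite eq_sym oner_eq0.
elim=> [|e IHe] x Ex; first by rewrite expn0 expr1 => ->; rewrite expr1n.
rewrite expnS exprM => /(IHe _ (rpredX 2 Ex)) /eqP; rewrite sqrf_eq1.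
case/orP=> /eqP // x2; exfalso.
have /eqP : (x - i) * (x + i) = 0 by rewrite -subr_sqr x2 i2 subrr.
rewrite mulf_eq0 subr_eq0 addr_eq0 => /orP[] /eqP x_eq; have := kHom_fixed homf Ex.
  by rewrite x_eq fi => /eqP; rewrite eq_sym (negPf i_neqNi).
have fNi : f (- i) = - f i := linearN f i.
by rewrite x_eq fNi fi opprK => /eqP; rewrite (negPf i_neqNi).
Qed.

End TwoPowerRoot.

Section RationalEmbedding.
Variables (L : fieldExtType rat) (iota : {rmorphism L -> algC}).

Lemma rmorph_horner_rat (q : {poly rat}) y :
  iota (map_poly (in_alg L) q).[y] = (map_poly ratr q).[iota y].
Proof.
rewrite -horner_map /= -map_poly_comp; congr _.[_]; apply: eq_map_poly => r /=.
by have /= -> := fmorph_eq_rat (in_alg L) r; rewrite fmorph_rat.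
Qed.

Lemma rmorph_Fadjoin1 x y : x \in <<1; y>>%VS ->
  exists q : {poly rat}, iota x = (map_poly ratr q).[iota y].
Proof.
case/Fadjoin_polyP => c /polyOver1P[q ->] ->.
by exists q; rewrite rmorph_horner_rat.
Qed.

End RationalEmbedding.

Lemma dvdC_irr1_pgroup (gT : finGroupType) (P : {group gT}) p (i : Iirr P) :
  prime p -> (p.-group P)%g -> 'chi_i 1%g != 1 -> (p%:R %| 'chi_i 1%g)%C.
Proof.
move=> p_pr pP; rewrite irr1_degree; have [e cardP] := p_natP pP.
have := dvd_irr1_cardG i; rewrite irr1_degree cardP dvdC_nat.
case/(dvdn_pfactor _ _ p_pr) => [[|m]] _ ->; first by rewrite eqxx.
by rewrite dvdC_nat expnS dvdn_mulr.
Qed.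

Section Conductor.
Variables (gT : finGroupType) (P : {group gT}) (p : nat) (i : Iirr P) (a : nat).
Hypotheses (p_pr : prime p) (pP : (p.-group P)%g) (a_gt0 : (0 < a)%N)
  (cond_chi : conductor_is 'chi_i (p ^ a)).
Variables (L : fieldExtType rat) (iota : {rmorphism L -> algC}) (s : seq L) (z : L).
Hypotheses (s_chi : map iota s = [seq 'chi_i g | g in P])
  (iota_z_prim : (p ^ a).-primitive_root (iota z)).

Let z_prim : (p ^ a).-primitive_root z.
Proof. by rewrite -(fmorph_primitive_root iota). Qed.

Let pa_eq : (p ^ a = p * p ^ a.-1)%N. Proof. by rewrite -expnS prednK. Qed.

Lemma chi_value_s g : g \in P -> exists2 x, x \in s & iota x = 'chi_i g.
Proof.
move=> Pg; have : 'chi_i g \in map iota s by rewrite s_chi map_f ?mem_enum.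
by case/mapP => x sx ->; exists x.
Qed.

Lemma s_subv_Qz : {subset s <= <<1; z>>%VS}.
Proof.
move=> x sx; have : iota x \in [seq 'chi_i g | g in P] by rewrite -s_chi map_f.
case/mapP => g; rewrite mem_enum => Pg chi_g.
have [_ [Qn_chi _]] := cond_chi; have [w w_prim [q chi_q]] := Qn_chi g Pg.
have [j w_eq] := prim_rootP iota_z_prim (prim_expr_order w_prim).
have /fmorph_inj -> : iota x = iota (map_poly (in_alg L) q).[z ^+ j].
  by rewrite rmorph_horner_rat rmorphXn -w_eq chi_g chi_q.
apply: rpred_horner; last by rewrite rpredX ?memv_adjoin.
by apply/(polyOverSv (sub1v _))/polyOver1P; exists q.
Qed.

Definition Qpchi : {subfield L} := <<1 & z ^+ (p ^ a.-1) :: s>>%AS.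

Lemma expz_Qpchi : z ^+ (p ^ a.-1) \in Qpchi.
Proof. by apply: seqv_sub_adjoin; rewrite mem_head. Qed.

Lemma s_Qpchi : {subset s <= Qpchi}.
Proof. by move=> x sx; apply: seqv_sub_adjoin; rewrite inE sx orbT. Qed.

Lemma Qpchi_subv_Qz : (Qpchi <= <<1; z>>)%VS.
Proof.
apply/Fadjoin_seqP; split=> [|x]; first exact: sub1v.
by rewrite inE => /predU1P[-> | /s_subv_Qz //]; rewrite rpredX ?memv_adjoin.
Qed.

Lemma Fadjoin_Qpchi : <<1 & z :: s>>%VS = <<Qpchi; z>>%VS.
Proof.
have Qpa_z : z \in <<1 & z :: s>>%VS by apply: seqv_sub_adjoin; rewrite mem_head.
apply/eqP; rewrite eqEsubv; apply/andP; split.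
  apply/Fadjoin_seqP; split=> [|x]; first exact: sub1v.
  rewrite inE => /predU1P[-> | sx]; first exact: memv_adjoin.
  exact/(subvP (subv_adjoin _ _))/s_Qpchi.
apply/FadjoinP; split=> //; apply/Fadjoin_seqP; split=> [|x]; first exact: sub1v.
rewrite inE => /predU1P[-> | sx]; first by rewrite rpredX.
by apply: seqv_sub_adjoin; rewrite inE sx orbT.
Qed.

Lemma Qpchi_not_subv_expp : (1 < a)%N -> ~ (Qpchi <= <<1; z ^+ p>>)%VS.
Proof.
move=> a_gt1 Qpchi_sub; have [_ [_ cond_min]] := cond_chi.
suff /cond_min : values_in_Qn 'chi_i (p ^ a.-1).
  rewrite expn_gt0 prime_gt0 // leq_exp2l ?prime_gt1 // => /(_ isT).
  by rewrite -ltnS prednK // ltnn.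
move=> g Pg; have [x sx <-] := chi_value_s Pg.
have [q x_q] := rmorph_Fadjoin1 iota (subvP Qpchi_sub _ (s_Qpchi sx)).
exists (iota (z ^+ p)); last by exists q.
rewrite fmorph_primitive_root.
have pa1_dvd : (p ^ a.-1 %| p ^ a)%N by rewrite pa_eq dvdn_mull.
by have := dvdn_prim_root z_prim pa1_dvd; rewrite {1}pa_eq mulnK ?expn_gt0 ?prime_gt0.
Qed.

(* Any other conjugate would put Q_p(chi) inside Q_(p^(a-1)) by
   exists_expn_sub1_exact and subv_Fadjoin_expp, against c(chi) = p^a. *)
Lemma Qpchi_conj_expr k : root (minPoly Qpchi z) (z ^+ k) -> z ^+ k != z ->
  [/\ p = 2%N, (2 < a)%N & (k %% 4 = 3)%N].
Proof.
move=> root_k zk_neqz.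
have [k_gt0 p_dvd] := root_minPoly_expr_congr1 p_pr a_gt0 z_prim expz_Qpchi root_k.
have not_pa_dvd : ~~ (p ^ a %| k - 1)%N.
  by rewrite -eqn_mod_dvd // -(eq_prim_root_expr z_prim) expr1.
have a_gt1 : (1 < a)%N.
  by rewrite ltn_neqAle a_gt0 andbT; apply: contraNneq not_pa_dvd => <-.
have cond : ~~ [|| odd p, 4 %| k - 1 | a == 2]%N.
  apply/negP => cond; apply: (Qpchi_not_subv_expp a_gt1).
  have [m /andP[dvd_m not_dvd_m]] :=
    exists_expn_sub1_exact p_pr a_gt1 k_gt0 p_dvd not_pa_dvd cond.
  apply: subv_Fadjoin_expp p_pr a_gt0 z_prim _ Qpchi_subv_Qz a_gt1 _ dvd_m not_dvd_m.
  exact: root_minPoly_exprX.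
have [p2 | p_odd] := even_prime p_pr; last by rewrite p_odd in cond.
move: cond p_dvd; rewrite p2 /= negb_or => /andP[not_4_dvd a_neq2] two_dvd.
split=> //; first by rewrite ltn_neqAle eq_sym a_neq2.
by move: two_dvd not_4_dvd; lia.
Qed.

Lemma Qpchi_conj r : r != z -> root (minPoly Qpchi z) r ->
  exists k, [/\ r = z ^+ k, p = 2%N, (2 < a)%N & (k %% 4 = 3)%N].
Proof.
move=> r_neqz root_r; have [k r_eq] := root_minPoly_prim_root z_prim root_r.
by rewrite r_eq in r_neqz root_r; have [] := Qpchi_conj_expr root_r r_neqz; exists k.
Qed.

Lemma z_in_Qpchi : (odd p \/ p ^ a = 4)%N -> z \in Qpchi.
Proof.
move=> p_odd_or_4; apply/negPn/negP; rewrite -adjoin_deg_eq1 => deg_neq1.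
have /(adjoin_deg_gt1_conj z_prim)[r r_neqz] : (1 < adjoin_degree Qpchi z)%N.
  by rewrite ltn_neqAle eq_sym deg_neq1.
move=> /(Qpchi_conj r_neqz).
case=> k [_ p2 a_gt2 _]; case: p_odd_or_4; rewrite p2 // => pa4.
by move: (leq_pexp2l (isT : 0 < 2)%N a_gt2); rewrite pa4.
Qed.

Lemma adjoin_degree_Qpchi_le2 : (adjoin_degree Qpchi z <= 2)%N.
Proof.
rewrite leqNgt; apply/negP.
case/(adjoin_deg_gt2_conj z_prim) => r1 [r2 [r12 r1z r2z root1 root2]].
have [k1 [r1_eq _ _ k1_mod4]] := Qpchi_conj r1z root1.
have [k2 [r2_eq _ _ k2_mod4]] := Qpchi_conj r2z root2.
rewrite r1_eq in root1; rewrite r2_eq in root2.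
have fixed_1mod4 k : root (minPoly Qpchi z) (z ^+ k) -> (k %% 4 = 1)%N -> z ^+ k = z.
  move=> root_k k_mod4; apply/eqP; apply: contraTT isT.
  by case/(Qpchi_conj_expr root_k) => _ _; rewrite k_mod4.
have z_k1k2 : z ^+ (k1 * k2) = z.
  apply: fixed_1mod4 (root_minPoly_exprM root1 root2) _.
  by rewrite -modnMml -modnMmr k1_mod4 k2_mod4.
have z_k1k1 : z ^+ (k1 * k1) = z.
  apply: fixed_1mod4 (root_minPoly_exprM root1 root1) _.
  by rewrite -modnMml -modnMmr k1_mod4.
move/eqP: r12; apply; rewrite r1_eq r2_eq -[in RHS]z_k1k1 -exprM.
by rewrite mulnAC exprM z_k1k2.
Qed.

(* If chi were linear its values would be 2-power roots of unity in Q_2(chi);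
   the conjugation z |-> z ^+ k, k = 3 (mod 4), forces them to be +1 or -1. *)
Lemma irr1_neq1 : z \notin Qpchi -> 'chi_i 1%g != 1.
Proof.
rewrite -adjoin_deg_eq1 => deg_neq1.
have /(adjoin_deg_gt1_conj z_prim)[r r_neqz root_r] : (1 < adjoin_degree Qpchi z)%N.
  by rewrite ltn_neqAle eq_sym deg_neq1.
have [k [r_eq p2 a_gt2 k_mod4]] := Qpchi_conj r_neqz root_r; subst r.
have homf := kHomExtend1P root_r; have fz := kHomExtend1_val root_r.
have z_prim2 : (2 ^ a).-primitive_root z by rewrite -p2.
apply/negP => /eqP chi1; have [_ [_ cond_min]] := cond_chi.
suff /cond_min : values_in_Qn 'chi_i 1.
  by move=> /(_ isT); rewrite leqNgt -[X in (X < _)%N](expn0 p) ltn_exp2l ?prime_gt1 ?a_gt0.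
have lin_chi : 'chi_i \is a linear_char by rewrite qualifE /= irr_char chi1 eqxx.
have one_prim : 1.-primitive_root (iota z ^+ (p ^ a)).
  by have := dvdn_prim_root iota_z_prim (dvd1n (p ^ a)); rewrite divn1.
move=> g Pg; have [x sx x_chi] := chi_value_s Pg.
have [e ord_g] := p_natP (mem_p_elt pP Pg).
have x_unity : x ^+ (2 ^ e) = 1.
  apply: (fmorph_inj iota); rewrite rmorphXn rmorph1 x_chi -p2 -ord_g.
  exact: lin_char_unity_root.
have /eqP := kHom_unity_2power_sqr1 (ltnW a_gt2) z_prim2 homf fz k_mod4 (s_Qpchi sx) x_unity.
rewrite sqrf_eq1 -x_chi => /orP[] /eqP ->; exists (iota z ^+ (p ^ a)) => //.
  by exists 1; rewrite !rmorph1 -polyC1 hornerC.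
by exists (-1); rewrite !rmorphN1 hornerN -polyC1 hornerC.
Qed.

End Conductor.

Theorem lemma3p1 (gT : finGroupType) (P : {group gT}) (p : nat) (i : Iirr P)
  (a : nat) :
  prime p -> (p.-group P)%g -> (0 < a)%N -> conductor_is 'chi_i (p ^ a) ->
  forall (L : fieldExtType rat) (iota : {rmorphism L -> algC})
         (s : seq L) (z : L),
  map iota s = [seq 'chi_i g | g in P] ->
  (p ^ a).-primitive_root (iota z) ->
  let QpaA := <<1 & z :: s>>%VS in
  let QpA := <<1 & (z ^+ (p ^ a.-1))%R :: s>>%VS in
  ((odd p \/ p ^ a = 4)%N -> QpaA = QpA) /\
  (p = 2%N -> (8 <= p ^ a)%N ->
     (\dim_QpA QpaA <= 2)%N /\ ((\dim_QpA QpaA)%:R %| 'chi_i 1%g)%C).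
Proof.
move=> p_pr pP a_gt0 cond_chi L iota s z s_chi iota_z_prim QpaA QpA.
have QpaA_eq : QpaA = <<Qpchi p a s z; z>>%VS := Fadjoin_Qpchi p a s z.
have dim_eq : \dim_QpA QpaA = adjoin_degree (Qpchi p a s z) z.
  by rewrite QpaA_eq adjoin_degreeE.
split=> [p_odd_or_4 | p2 _].
  have /Fadjoin_idP := z_in_Qpchi p_pr pP a_gt0 cond_chi s_chi iota_z_prim p_odd_or_4.
  by rewrite QpaA_eq => ->.
have deg_le2 := adjoin_degree_Qpchi_le2 p_pr pP a_gt0 cond_chi s_chi iota_z_prim.
rewrite dim_eq; split=> //.
have [z_in | z_notin] := boolP (z \in Qpchi p a s z).
  by move: z_in; rewrite -adjoin_deg_eq1 => /eqP->; rewrite irr1_degree (dvdC_nat 1) dvd1n.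
have deg2 : adjoin_degree (Qpchi p a s z) z = 2%N.
  by apply/eqP; rewrite eqn_leq deg_le2 ltn_neqAle eq_sym adjoin_deg_eq1 z_notin.
rewrite deg2 -p2 (dvdC_irr1_pgroup p_pr pP) //.
exact: (irr1_neq1 p_pr pP a_gt0 cond_chi s_chi iota_z_prim z_notin).
Qed.
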